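(* Let $\vec{G_1},\dots,\vec{G_k}$ be pairwise vertex-disjoint oriented graphs such that $\vec{G_1}$ is a DDMOG and, for every $2\le i\le k$, $\vec{G_i}$ is a DDMOG with $imb(\vec{G_i})=0$. Then the union $\vec{G}=\bigcup_{i=1}^k\vec{G_i}$ is a DDMOG.
   Context: An oriented graph is a finite digraph without loops such that whenever $(u,v)$ is an arc, $(v,u)$ is not. For a vertex $v$, $N^+(v)=\{x:(x,v)\text{ is an arc}\}$, $N^-(v)=\{x:(v,x)\text{ is an arc}\}$, $imb(v)=|N^+(v)|-|N^-(v)|$, and $imb(\vec{G})=\max_v|imb(v)|$. For a labeling $f$, $wt_f(v)=\sum_{x\in N^+(v)}f(x)-\sum_{x\in N^-(v)}f(x)$. A DDM labeling of an oriented graph on $n$ vertices is a bijection $f:V\to\{1,\dots,n\}$ with $wt_f(v)=0$ for all $v$; a DDMOG is an oriented graph admitting a DDM labeling. *)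

From mathcomp Require Import all_boot all_order all_algebra.
Set Implicit Arguments. Unset Strict Implicit. Unset Printing Implicit Defensive.
Import Order.TTheory GRing.Theory Num.Theory.
Local Open Scope ring_scope.

(* A digraph on a finite vertex type V is given by its arc relation a:
   a u v  <->  (u,v) is an arc. *)
Section OrientedGraphs.
Variables (V : finType) (a : rel V).

Definition oriented : Prop :=
  (forall v, ~~ a v v) /\ (forall u v, a u v -> ~~ a v u).

Definition Nplus (v : V) : {set V} := [set x | a x v].
Definition Nminus (v : V) : {set V} := [set x | a v x].

Definition imb (v : V) : int := (#|Nplus v|%:Z - #|Nminus v|%:Z).

Definition imbG : nat := (\max_(v : V) `|imb v|)%N.

Definition wt (f : V -> nat) (v : V) : int :=
  (\sum_(x in Nplus v) (f x)%:Z) - (\sum_(x in Nminus v) (f x)%:Z).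

Definition labeling (f : V -> nat) : Prop :=
  injective f /\ (forall v, (0 < f v <= #|V|)%N) /\
  (forall m, (0 < m <= #|V|)%N -> exists v, f v = m).

Definition DDM_labeling (f : V -> nat) : Prop :=
  labeling f /\ forall v, wt f v = 0.

Definition DDMOG : Prop := oriented /\ exists f, DDM_labeling f.

End OrientedGraphs.

(* The part of a graph on T consisting of the vertices of colour i
   (as an oriented graph on its own vertex set). *)
Definition part (T : finType) (c : T -> nat) (i : nat) : finType :=
  {x : T | c x == i}.
Definition part_rel (T : finType) (a : rel T) (c : T -> nat) (i : nat)
  : rel (part c i) := fun x y => a (val x) (val y).
Arguments part_rel {T} a c i.
Arguments DDMOG {V} a.
Arguments imbG {V} a.
Arguments oriented {V} a.

From mathcomp Require Import all_boot all_order all_algebra.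
From mathcomp Require Import zify.
From Stdlib Require Import ClassicalEpsilon.
Set Implicit Arguments. Unset Strict Implicit. Unset Printing Implicit Defensive.
Import Order.TTheory GRing.Theory Num.Theory.

(* Label the parts consecutively: a vertex of colour i gets its label in a
   DDM labeling of G_i, shifted by the number of vertices of smaller colour.
   Adding a constant o to every label changes the weight of v by o * imb(v),
   which vanishes on G_1 (where o = 0) and on the balanced G_i, i >= 2. *)

Section Labelings.
Variables (V : finType) (a : rel V).

Lemma wt_shift (f g : V -> nat) (o : nat) :
  (forall x, g x = o + f x) ->
  forall v, wt a g v = (wt a f v + (o : int) * imb a v)%R.
Proof.
move=> gE v; rewrite /wt /imb.
under eq_bigr do rewrite gE PoszD.
under [X in (_ - X)%R]eq_bigr do rewrite gE PoszD.
rewrite !big_split /= !sumr_const !pmulrn mulrBr !mulrzz.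
by rewrite opprD addrACA addrC.
Qed.

Lemma imbG_eq0 : imbG a = 0 -> forall v, imb a v = 0%R.
Proof.
move=> imb0 v; apply/eqP; rewrite -absz_eq0 -leqn0 -imb0.
exact: (@leq_bigmax _ (fun w => `|imb a w|%N) v).
Qed.

Lemma labeling_of_inj_range (f : V -> nat) :
  injective f -> (forall v, 0 < f v <= #|V|) -> labeling f.
Proof.
move=> f_inj f_range; split=> //; split=> // m m_range.
have lt_pred v : (f v).-1 < #|V| by have := f_range v; lia.
pose g v : 'I_#|V| := Ordinal (lt_pred v).
have g_inj : injective g.
  move=> u v /(congr1 val) /= eq_pred; apply: f_inj.
  by have := f_range u; have := f_range v; lia.
have lt_m : m.-1 < #|V| by lia.
have := inj_card_onto g_inj _ (Ordinal lt_m).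
rewrite card_ord leqnn => /(_ isT) /codomP [v /(congr1 val) /= eq_m].
by exists v; have := f_range v; lia.
Qed.

End Labelings.

Section Parts.
Variables (T : finType) (c : T -> nat).

Definition to_part (v : T) : part c (c v) := exist _ v (eqxx (c v)).

Lemma card_part i : #|part c i| = #|[set x | c x == i]|.
Proof. by rewrite card_sig cardsE. Qed.

Lemma big_part_val (R : Type) (idx : R) (op : Monoid.com_law idx)
    i (P : pred T) (F : T -> R) :
  (forall x, P x -> c x = i) ->
  \big[op/idx]_(y in [set y : part c i | P (val y)]) F (val y) =
  \big[op/idx]_(x in [set x | P x]) F x.
Proof.
move=> P_part.
rewrite [RHS](reindex_omap (val : part c i -> T) insub); last first.
  by move=> x; rewrite inE => Px; rewrite insubT ?(introT eqP (P_part x Px)).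
by apply: eq_bigl => y; rewrite !inE valK /= eqxx andbT.
Qed.

Definition offset i := #|[set x | c x < i]|.

Lemma offsetS i : offset i.+1 = offset i + #|part c i|.
Proof.
rewrite /offset card_part -(cardsID [set x | c x < i] [set x | c x < i.+1]).
by congr (_ + _); apply: eq_card => x; rewrite !inE; lia.
Qed.

Lemma leq_offset i j : i <= j -> offset i <= offset j.
Proof.
by move=> le_ij; apply/subset_leq_card/subsetP => x; rewrite !inE; lia.
Qed.

Lemma offset_le_card i : offset i <= #|T|.
Proof. exact: max_card. Qed.

Lemma offset_eq0 i : (forall v, i <= c v) -> offset i = 0.
Proof.
by move=> ge_i; apply: eq_card0 => x; rewrite !inE; have := ge_i x; lia.
Qed.

Section Glue.
Variable f : forall i, part c i -> nat.

(* [insub v] always succeeds; the match only avoids a dependent cast. *)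
Definition glue (v : T) : nat :=
  offset (c v) + (if insub v : option (part c (c v)) is Some y then f y else 0).

Lemma glue_val i (y : part c i) : glue (val y) = offset i + f y.
Proof.
case: y => x c_x; have c_xi := eqP c_x; subst i.
by rewrite /glue /= (insubT (fun z => c z == c x) c_x).
Qed.

Hypothesis f_labeling : forall v, labeling (@f (c v)).

Lemma glue_bounds v : offset (c v) < glue v <= offset (c v).+1.
Proof.
have [_ [f_range _]] := f_labeling v.
by rewrite offsetS (glue_val (to_part v)); have := f_range (to_part v); lia.
Qed.

Lemma glue_inj : injective glue.
Proof.
move=> u v eq_uv; have := glue_bounds u; have := glue_bounds v.
have [lt_uv | lt_vu | c_uv] := ltngtP (c u) (c v).
- by have := leq_offset lt_uv; lia.
- by have := leq_offset lt_vu; lia.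
have [f_inj _] := f_labeling u.
move: eq_uv; rewrite (glue_val (to_part u)).
have cvu : c v == c u by rewrite c_uv.
by rewrite (glue_val (exist _ v cvu)) => /addnI /f_inj /(congr1 val).
Qed.

Lemma labeling_glue : labeling glue.
Proof.
apply: labeling_of_inj_range glue_inj _ => v.
by have := glue_bounds v; have := offset_le_card (c v).+1; lia.
Qed.

End Glue.

Variable a : rel T.
Hypothesis arc_part : forall u v, a u v -> c u = c v.

Lemma oriented_of_parts :
  (forall v, oriented (part_rel a c (c v))) -> oriented a.
Proof.
move=> part_or; split=> [v | u v auv].
  exact: (part_or v).1 (to_part v).
have cuv : c u == c v by rewrite (arc_part auv).
exact: (part_or v).2 (exist _ u cuv) (to_part v) auv.
Qed.

Lemma wt_part (g : T -> nat) i (y : part c i) :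
  wt a g (val y) = wt (part_rel a c i) (fun x => g (val x)) y.
Proof.
have c_y : c (val y) = i by case: y => y /= /eqP.
have in_plus x : a x (val y) -> c x = i by move/arc_part; rewrite c_y.
have in_minus x : a (val y) x -> c x = i by move/arc_part <-.
rewrite /wt /Nplus /Nminus /part_rel.
by rewrite -(big_part_val _ _ in_plus) -(big_part_val _ _ in_minus).
Qed.

End Parts.

Theorem theorem5 (T : finType) (a : rel T) (k : nat) (c : T -> nat) :
  (1 <= k)%N ->
  (forall v, (1 <= c v <= k)%N) ->
  (forall i, (1 <= i <= k)%N -> oriented (part_rel a c i)) ->
  (forall u v, a u v -> c u = c v) ->
  DDMOG (part_rel a c 1) ->
  (forall i, (2 <= i <= k)%N -> DDMOG (part_rel a c i) /\ imbG (part_rel a c i) = 0%N) ->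
  DDMOG a.
Proof.
move=> _ c_range part_or arc_part [_ [f1 f1_DDM]] part_DDM.
split; first by apply: oriented_of_parts arc_part _ => v; apply: part_or.
have DDM_ex i : exists g, 1 <= i <= k -> DDM_labeling (part_rel a c i) g.
  have [-> | i_ne1] := eqVneq i 1; first by exists f1.
  have [i_range | _] := boolP (1 <= i <= k); last by exists (fun=> 0).
  have [[_ [g g_DDM]] _] := part_DDM i ltac:(lia).
  by exists g.
pose f i := proj1_sig (constructive_indefinite_description _ (DDM_ex i)).
have f_DDM v : DDM_labeling (part_rel a c (c v)) (f (c v)).
  exact: (proj2_sig (constructive_indefinite_description _ (DDM_ex (c v)))).
exists (glue f); split; first by apply: labeling_glue => v; case: (f_DDM v).
move=> v; have := wt_part arc_part (glue f) (to_part c v); rewrite /= => ->.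
rewrite (wt_shift _ (glue_val f (i := c v))) (f_DDM v).2 add0r.
have [c_v1 | c_vn1] := eqVneq (c v) 1.
  have offset0 : offset c (c v) = 0.
    by rewrite c_v1; apply: offset_eq0 => u; have := c_range u; lia.
  by rewrite offset0 mul0r.
have [_ imb0] := part_DDM (c v) ltac:(have := c_range v; lia).
by rewrite (imbG_eq0 imb0) mulr0.
Qed.
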